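(* Let $k,m,n$ be positive integers with $m\le n(n+1)/2$. Let $\mathcal{C}$ be any algorithm that, given an $m\times n$ matrix $A$ whose entries are $O(k)$-bit integers, produces a data structure (bit string) $\mathcal{C}(A)$ from which, independently of $A$, the value $\mu_A(J)$ can be evaluated for every $J\in\mathbb{I}_n$. Then $\mathcal{C}(A)$ needs $\Omega(km)$ bits of space (i.e. in the worst case over such matrices $A$, $\mathcal{C}(A)$ has at least $c\,km$ bits for an absolute constant $c>0$).
   Context: For integers $i\le j$, $[i:j]=\{i,\dots,j\}$; $\mathbb{I}_n=\{[i:j]:1\le i\le j\le n\}$. For a matrix $A=[a_{ij}]$ with $n$ columns, $\mu_A:\mathbb{I}_n\to\mathbb{R}$ is $\mu_A(J)=\max_{k'\ge1}\sum_{i=1}^{k'}\sum_{j\in J}a_{ij}$, the maximum over row indices $k'$. *)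

From HB Require Import structures.
From mathcomp Require Import all_boot all_order all_algebra.
Set Implicit Arguments. Unset Strict Implicit. Unset Printing Implicit Defensive.
Import Order.TTheory GRing.Theory Num.Theory.
Local Open Scope ring_scope.

(* Columns/rows are 0-based ordinals: paper's column c+1 is our c : 'I_n,
   and paper's row index k' (1-based) corresponds to rows r < k'. *)

Definition colsum (m n : nat) (A : 'M[int]_(m, n)) (i j : nat) (r : 'I_m) : int :=
  \sum_(c : 'I_n | (i <= c <= j)%N) A r c.

Definition prefix (m n : nat) (A : 'M[int]_(m, n)) (i j K : nat) : int :=
  \sum_(r : 'I_m | (r < K)%N) colsum A i j r.

Definition mu (m n : nat) (A : 'M[int]_(m, n)) (i j : nat) : int :=
  \big[Num.max/prefix A i j 1]_(1 <= K < m.+1) prefix A i j K.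

Definition bounded_bits (m n : nat) (b : nat) (A : 'M[int]_(m, n)) : Prop :=
  forall (r : 'I_m) (c : 'I_n), (absz (A r c) < 2 ^ b)%N.

From Pilot Require Import Defs.
From mathcomp Require Import all_boot all_order all_algebra zify.
Import Order.TTheory GRing.Theory Num.Theory.

Set Implicit Arguments.
Unset Strict Implicit.
Unset Printing Implicit Defensive.

(* Counting: if the values of [mu] on the intervals determine [u = min(m, p q) >= m / 2]
   arbitrary k-bit numbers [x_s] hidden in a matrix with O(k)-bit entries, then the
   2^(k u) such matrices have pairwise distinct codes, and one code has >= k u bits.
   Take p + q = n + 1 and attach to row s the s-th interval [a+1 : b], a < p <= b, in
   lexicographic order. Row s is the discrete derivative of a potential chosen so that
   its sum over the r-th interval is >= 0 for s < r, equals x_r for s = r and is <= 0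
   for s > r. Then mu of the r-th interval is attained by the first r+1 rows: it is
   x_r plus terms depending only on x_0, ..., x_(r-1), so forward substitution
   recovers every x_r. *)

Definition pad_bits (N : nat) (s : seq bool) : seq bool :=
  s ++ true :: nseq (N - (size s).+1) false.

Lemma pad_bits_inj N : injective (pad_bits N).
Proof.
have nseq_true_inj a a' (w w' : seq bool) :
    nseq a false ++ true :: w = nseq a' false ++ true :: w' -> w = w'.
  by elim: a a' => [|a IH] [|a'] //= [] // /IH.
move=> s s' /(congr1 rev); rewrite !rev_cat !rev_cons !rev_nseq -!cats1 -!catA.
by move/nseq_true_inj/(congr1 rev); rewrite !revK.
Qed.

Lemma injective_bits_long (T : finType) (f : T -> seq bool) N :
  injective f -> 2 ^ N <= #|T| -> exists t, N <= size (f t).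
Proof.
move=> f_inj le_2N_T; suff /existsP[t] : [exists t, N <= size (f t)] by exists t.
apply: contraT; rewrite negb_exists => /forallP short.
have size_pad t : size (pad_bits N (f t)) == N.
  by rewrite size_cat /= size_nseq; have := short t; lia.
pose g t : N.-tuple bool := Tuple (size_pad t).
have g_inj : injective g by move=> t1 t2 /(congr1 val) /pad_bits_inj /f_inj.
(* Every padded word contains [true], so the all-[false] word is missed. *)
have proper_img : [set g t | t in T] \proper [set: N.-tuple bool].
  apply/properP; split; first exact: subsetT.
  exists [tuple of nseq N false]; first by rewrite inE.
  apply/imsetP => -[t _ /(congr1 val) /= nseq_pad].
  have : true \in pad_bits N (f t) by rewrite mem_cat mem_head orbT.
  by rewrite -nseq_pad mem_nseq andbF.
have := proper_card proper_img.
by rewrite card_imset // cardsT card_tuple card_bool ltnNge le_2N_T.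
Qed.

Local Open Scope ring_scope.

Section SignChange.
Variables (m n : nat) (A : 'M[int]_(m, n)) (i j r : nat).
Hypothesis colsum_ge0 : forall s : 'I_m, (s <= r)%N -> 0 <= colsum A i j s.
Hypothesis colsum_le0 : forall s : 'I_m, (r < s)%N -> colsum A i j s <= 0.

Lemma prefix_le_sign_change (K : nat) : Defs.prefix A i j K <= Defs.prefix A i j r.+1.
Proof.
rewrite -subr_le0 /Defs.prefix big_mkcond [X in _ - X]big_mkcond -sumrB.
apply: sumr_le0 => s _ /=.
case: (leqP s r) => [le_sr | lt_rs].
  by have := colsum_ge0 le_sr; rewrite ltnS le_sr; case: ifP; lia.
by have := colsum_le0 lt_rs; rewrite ltnS (leqNgt s r) lt_rs /=; case: ifP; lia.
Qed.

Lemma mu_sign_change : (r < m)%N -> mu A i j = Defs.prefix A i j r.+1.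
Proof.
move=> lt_rm; apply: le_anti; apply/andP; split.
  by apply: bigmax_le => [|K _]; apply: prefix_le_sign_change.
by apply: le_bigmax_seq; rewrite // mem_index_iota; lia.
Qed.

End SignChange.

Lemma colsum_telescope m n (A : 'M[int]_(m, n)) (Q : nat -> int) i j r :
  (j < n)%N -> (i <= j.+1)%N -> (forall c : 'I_n, A r c = Q c.+1 - Q c) ->
  colsum A i j r = Q j.+1 - Q i.
Proof.
move=> lt_jn le_ij AQ; rewrite /colsum.
under eq_bigr do rewrite AQ.
by rewrite -telescope_sumr // big_geq_mkord (big_ord_widen_cond n _ (fun c => Q c.+1 - Q c)).
Qed.

Lemma eq_from_unitriangular (u : nat) (c : nat -> nat -> nat -> int) (x y : nat -> nat) :
  (forall r, (r < u)%N ->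
     \sum_(s < r) c r s (x s) + (x r)%:Z = \sum_(s < r) c r s (y s) + (y r)%:Z) ->
  forall r, (r < u)%N -> x r = y r.
Proof.
move=> eq_xy; elim/ltn_ind => r IH lt_ru.
have := eq_xy r lt_ru.
rewrite (eq_bigr (fun s : 'I_r => c r s (y s))) => [/addrI [] // | s _].
by rewrite IH // (ltn_trans _ lt_ru).
Qed.

Section Gadget.
Variables (m n p q M : nat).

(* Row [s] is attached to the columns [ivl_lo s <= c < ivl_hi s] (0-based, so the paper's
   interval [ivl_lo s + 1 : ivl_hi s]); for [s < p * q] we have [ivl_lo s < p <= ivl_hi s],
   and [s] orders these intervals lexicographically. *)
Definition ivl_lo (s : nat) : nat := (s %/ q)%N.
Definition ivl_hi (s : nat) : nat := (p + s %% q)%N.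

Definition profile (s t : nat) : int :=
  if (t < p)%N then (if (t < ivl_lo s)%N then 2 else if t == ivl_lo s then 0 else -2)
  else (if (t < ivl_hi s)%N then -1 else if t == ivl_hi s then 0 else 1).

(* Since [x < M], the [M]-scaled profile decides the sign of [ivl_sum x s r] off the
   diagonal, while the [x]-term cancels unless [ivl_lo r <= ivl_lo s < ivl_hi r]. *)
Definition potential (x s t : nat) : int :=
  M%:Z * profile s t + (if (ivl_lo s < t)%N then x%:Z else 0).

Definition ivl_sum (x s r : nat) : int := potential x s (ivl_hi r) - potential x s (ivl_lo r).

Let u := minn m (p * q).

Definition gadget (x : nat -> nat) : 'M[int]_(m, n) :=
  \matrix_(s, c) if (s < u)%N then potential (x s) s c.+1 - potential (x s) s c else 0.

Lemma potential_step x s t : (x < M)%N ->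
  (absz (potential x s t.+1 - potential x s t) < 8 * M)%N.
Proof. by move=> lt_xM; rewrite /potential /profile; repeat case: ifP; lia. Qed.

Lemma gadget_bounded x : (forall s, x s < M)%N ->
  forall s c, (absz (gadget x s c) < 8 * M)%N.
Proof.
move=> lt_xM s c; rewrite mxE; case: ifP => _; first exact: potential_step.
by have := lt_xM 0%N; lia.
Qed.

Lemma ivl_lo_lt s : (s < p * q)%N -> (ivl_lo s < p)%N.
Proof. by move=> lt_s; rewrite /ivl_lo ltn_divLR //; nia. Qed.

Lemma ivl_lex s r : (s < r)%N ->
  (ivl_lo s < ivl_lo r)%N \/ (ivl_lo s = ivl_lo r /\ ivl_hi s < ivl_hi r)%N.
Proof.
move=> lt_sr; rewrite /ivl_lo /ivl_hi.
have := leq_div2r q (ltnW lt_sr); rewrite leq_eqVlt => /orP [/eqP eq_lo|]; last by left.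
by right; split=> //; have := divn_eq s q; have := divn_eq r q; rewrite eq_lo; lia.
Qed.

Lemma ivl_sum_diag x r : (r < p * q)%N -> ivl_sum x r r = x%:Z.
Proof.
move=> lt_r; have := ivl_lo_lt lt_r.
by rewrite /ivl_sum /potential /profile /ivl_hi; repeat case: ifP; lia.
Qed.

Lemma ivl_sum_ge0 x s r : (s <= r)%N -> (r < p * q)%N -> 0 <= ivl_sum x s r.
Proof.
rewrite leq_eqVlt => /predU1P[-> lt_r | lt_sr lt_r]; first by rewrite ivl_sum_diag.
have := ivl_lo_lt lt_r; have := ivl_lo_lt (ltn_trans lt_sr lt_r).
have := ivl_lex lt_sr; rewrite /ivl_sum /potential /profile /ivl_hi.
by repeat case: ifP; lia.
Qed.

Lemma ivl_sum_le0 x s r : (x < M)%N -> (r < s)%N -> (s < p * q)%N -> ivl_sum x s r <= 0.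
Proof.
move=> lt_xM lt_rs lt_s; have := ivl_lo_lt lt_s; have := ivl_lo_lt (ltn_trans lt_rs lt_s).
have := ivl_lex lt_rs; rewrite /ivl_sum /potential /profile /ivl_hi.
by repeat case: ifP; lia.
Qed.

Hypothesis pq_n : (p + q = n.+1)%N.

Lemma ivl_bounds s : (s < p * q)%N -> [/\ ivl_lo s < p, p <= ivl_hi s & ivl_hi s <= n]%N.
Proof.
move=> lt_s; split; [exact: ivl_lo_lt | exact: leq_addr |].
by have := @ltn_pmod s q; rewrite /ivl_hi; nia.
Qed.

Lemma colsum_gadget x r (s : 'I_m) : (r < p * q)%N ->
  colsum (gadget x) (ivl_lo r) (ivl_hi r).-1 s = if (s < u)%N then ivl_sum (x s) s r else 0.
Proof.
move=> lt_r; have [lo_r p_hi hi_r] := ivl_bounds lt_r.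
rewrite (@colsum_telescope _ _ _ (fun t => if (s < u)%N then potential (x s) s t else 0)).
- by rewrite prednK /ivl_sum; [case: ifP; rewrite ?subr0 | lia].
- lia.
- lia.
- by move=> c; rewrite mxE; case: ifP; rewrite ?subr0.
Qed.

Lemma mu_gadget x r : (forall s, x s < M)%N -> (r < u)%N ->
  mu (gadget x) (ivl_lo r) (ivl_hi r).-1 = \sum_(s < r) ivl_sum (x s) s r + (x r)%:Z.
Proof.
move=> lt_xM lt_ru; have [lt_r lt_rm] : (r < p * q /\ r < m)%N by rewrite /u in lt_ru; lia.
rewrite (mu_sign_change _ _ lt_rm) => [|s le_sr|s lt_rs]; rewrite ?colsum_gadget //.
- rewrite /Defs.prefix; under eq_bigr do rewrite colsum_gadget //.
  rewrite -(big_ord_widen _ (fun s => if (s < u)%N then ivl_sum (x s) s r else 0)) //.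
  rewrite big_ord_recr /= ivl_sum_diag // ifT //; congr (_ + _).
  by apply: eq_bigr => s _; rewrite ifT // (ltn_trans _ lt_ru).
- by case: ifP => // _; apply: ivl_sum_ge0.
- by case: ifP => // lt_su; apply: ivl_sum_le0 => //; rewrite /u in lt_su; lia.
Qed.

Lemma gadget_mu_inj x y : (forall s, x s < M)%N -> (forall s, y s < M)%N ->
  (forall i j : 'I_n, (i <= j)%N -> mu (gadget x) i j = mu (gadget y) i j) ->
  forall s, (s < u)%N -> x s = y s.
Proof.
move=> lt_xM lt_yM eq_mu.
apply: (@eq_from_unitriangular u (fun r s v => ivl_sum v s r)) => r lt_ru.
have lt_r : (r < p * q)%N by rewrite /u in lt_ru; lia.
have [lo_r p_hi hi_r] := ivl_bounds lt_r.
have lt_lo : (ivl_lo r < n)%N by lia.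
have lt_hi : ((ivl_hi r).-1 < n)%N by lia.
rewrite -!mu_gadget //; apply: (eq_mu (Ordinal lt_lo) (Ordinal lt_hi)) => /=; lia.
Qed.

End Gadget.

Theorem lemma6p6 :
  exists (C d : nat), (0 < C)%N /\ (0 < d)%N /\
  forall (k m n : nat), (0 < k)%N -> (0 < m)%N -> (0 < n)%N ->
    (m <= n * n.+1 %/ 2)%N ->
    forall (enc : 'M[int]_(m, n) -> seq bool)
           (dec : seq bool -> 'I_n -> 'I_n -> int),
      (forall A : 'M[int]_(m, n), bounded_bits (C * k) A ->
         forall i j : 'I_n, (i <= j)%N -> dec (enc A) i j = mu A i j) ->
      exists A : 'M[int]_(m, n),
        bounded_bits (C * k) A /\ (k * m <= d * size (enc A))%N.
Proof.
exists 4%N, 2%N; split=> //; split=> //.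
move=> k m n k_gt0 _ _ le_m enc dec dec_mu.
pose p := (n.+1 %/ 2)%N; pose q := (n.+1 - p)%N; pose u := minn m (p * q).
have pq_n : (p + q = n.+1)%N by rewrite /q /p; lia.
have le_m_2u : (m <= 2 * u)%N by move: le_m; rewrite /u /q /p; nia.
pose x (f : {ffun 'I_u -> 'I_(2 ^ k)}) s := oapp (fun i => val (f i)) 0%N (insub s).
have lt_x f s : (x f s < 2 ^ k)%N by rewrite /x; case: insub => [i|] /=; rewrite ?expn_gt0.
pose A f := gadget m n p q (2 ^ k) (x f).
have A_bits f : bounded_bits (4 * k) (A f).
  move=> s c; apply: leq_trans (@gadget_bounded m n p q _ _ (lt_x f) s c) _.
  by rewrite -[8%N]/(2 ^ 3)%N -expnD leq_exp2l //; lia.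
have enc_inj : injective (enc \o A).
  move=> f g /= eq_enc; apply/ffunP => i; apply: val_inj.
  have := gadget_mu_inj pq_n (lt_x f) (lt_x g) _ (ltn_ord i).
  rewrite /x valK; apply=> i' j' le_ij; change (mu (A f) i' j' = mu (A g) i' j').
  by rewrite -!dec_mu // eq_enc.
have [f long_f] : exists f, (k * u <= size ((enc \o A) f))%N.
  by apply: injective_bits_long enc_inj _; rewrite card_ffun !card_ord expnM.
by exists (A f); split; [exact: A_bits | move: long_f le_m_2u => /=; nia].
Qed.
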